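(* Let $S$ be a monoid, $A$ a right $S$-act with a maximal subact $B$, and $a\in A\setminus B$. The following are equivalent: (1) $\mathfrak{M}=\{s\in S\mid as\in B\}$; (2) for $s\in S$, $as=a$ implies $s\notin\mathfrak{M}$.
   Context: $S$ is a monoid with identity $1$ having at least one right non-invertible element. A (right) $S$-act is a nonempty set with an action $(a,s)\mapsto as$, $a1=a$, $a(st)=(as)t$. A subact is a nonempty subset closed under the action; a maximal subact is a proper subact not properly contained in another proper subact. $\mathfrak{M}=\{s\in S\mid st\neq1\ \forall t\in S\}$ is the unique maximal right ideal of $S$. *)

Definition is_monoid {S : Type} (mul : S -> S -> S) (one : S) : Prop :=
  (forall x y z, mul x (mul y z) = mul (mul x y) z) /\
  (forall x, mul one x = x) /\ (forall x, mul x one = x).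

Definition has_right_noninvertible {S : Type} (mul : S -> S -> S) (one : S) : Prop :=
  exists s, forall t, mul s t <> one.

Definition is_right_act {S A : Type} (mul : S -> S -> S) (one : S)
  (act : A -> S -> A) : Prop :=
  inhabited A /\
  (forall a, act a one = a) /\
  (forall a s t, act a (mul s t) = act (act a s) t).

Definition is_subact {S A : Type} (act : A -> S -> A) (B : A -> Prop) : Prop :=
  (exists b, B b) /\ (forall b s, B b -> B (act b s)).

Definition is_proper {A : Type} (B : A -> Prop) : Prop := exists a, ~ B a.

Definition is_maximal_subact {S A : Type} (act : A -> S -> A) (B : A -> Prop) : Prop :=
  is_subact act B /\ is_proper B /\
  (forall C : A -> Prop, is_subact act C -> is_proper C ->
     (forall x, B x -> C x) -> forall x, C x -> B x).

Definition frakM {S : Type} (mul : S -> S -> S) (one : S) (s : S) : Prop :=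
  forall t, mul s t <> one.

From Stdlib Require Import Classical.

(* Maximality of B forces A = B ∪ (as)S whenever as ∉ B.  If s ∈ M
   but as ∉ B, then a = (as)t for some t, so a(st) = a with st ∈ M, which (2)
   forbids.  Conversely, if s ∉ M then st = 1 for some t, and as ∈ B would give
   a = (as)t ∈ B. *)

Lemma frakM_mulr {S : Type} (mul : S -> S -> S) (one : S) :
  (forall x y z, mul x (mul y z) = mul (mul x y) z) ->
  forall s t, frakM mul one s -> frakM mul one (mul s t).
Proof.
  intros Hass s t Hs u Hu. apply (Hs (mul t u)). now rewrite Hass.
Qed.

Definition orbit_union {S A : Type} (act : A -> S -> A) (B : A -> Prop) (x : A)
  : A -> Prop :=
  fun y => B y \/ exists t, y = act x t.

Lemma subact_orbit_union {S A : Type} (mul : S -> S -> S) (one : S)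
    (act : A -> S -> A) (B : A -> Prop) (x : A) :
  is_right_act mul one act -> is_subact act B ->
  is_subact act (orbit_union act B x).
Proof.
  intros [_ [Hact1 Hactm]] [_ Bcl]. split.
  - exists x. right. exists one. now rewrite Hact1.
  - intros y u [Hy | [t ->]].
    + left. now apply Bcl.
    + right. exists (mul t u). now rewrite Hactm.
Qed.

Lemma maximal_subact_orbit_union {S A : Type} (mul : S -> S -> S) (one : S)
    (act : A -> S -> A) (B : A -> Prop) (x : A) :
  is_right_act mul one act -> is_maximal_subact act B -> ~ B x ->
  forall y, orbit_union act B x y.
Proof.
  intros HA [HBsub [_ Hmax]] Hx y.
  apply NNPP. intros Hy.
  apply Hx, (Hmax (orbit_union act B x)).
  - exact (subact_orbit_union mul one act B x HA HBsub).
  - now exists y.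
  - intros z Hz. now left.
  - right. exists one. symmetry. now apply HA.
Qed.

Lemma subact_outside_frakM {S A : Type} (mul : S -> S -> S) (one : S)
    (act : A -> S -> A) (B : A -> Prop) (a : A) (s : S) :
  is_right_act mul one act -> is_subact act B ->
  ~ B a -> B (act a s) -> frakM mul one s.
Proof.
  intros [_ [Hact1 Hactm]] [_ Bcl] Ha Has t Hst.
  apply Ha. rewrite <- (Hact1 a), <- Hst, Hactm. now apply Bcl.
Qed.

Theorem lemma2p7 (S : Type) (mul : S -> S -> S) (one : S)
  (HS : is_monoid mul one) (Hni : has_right_noninvertible mul one)
  (A : Type) (act : A -> S -> A) (HA : is_right_act mul one act)
  (B : A -> Prop) (HB : is_maximal_subact act B)
  (a : A) (Ha : ~ B a) :
  (forall s, frakM mul one s <-> B (act a s)) <->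
  (forall s, act a s = a -> ~ frakM mul one s).
Proof.
  (* [Hni] only guarantees that frak M is a proper ideal; the equivalence does not need it. *)
  split.
  - intros Hchar s Hfix HM. apply Ha. rewrite <- Hfix. now apply Hchar.
  - intros Hfix s. split.
    + intros HM. apply NNPP. intros Has.
      destruct (maximal_subact_orbit_union mul one act B (act a s) HA HB Has a)
        as [Hb | [t Ht]]; [exact (Ha Hb) |].
      apply (Hfix (mul s t)).
      * rewrite (proj2 (proj2 HA)). now symmetry.
      * exact (frakM_mulr mul one (proj1 HS) s t HM).
    + exact (subact_outside_frakM mul one act B a s HA (proj1 HB) Ha).
Qed.
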